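(* Let $C,D$ be simple $k$-string diagrams. Then $\pi(C)=\pi(D)$ if and only if $\ell_i(C)=\ell_i(D)$ for all $i$ and there exist permutations $\sigma_i\in\Sigma_{\ell_i(D)}$ ($1\le i\le k$; with $\sigma_0=\mathrm{id}_{\langle1\rangle}$), each order preserving on the fibres of $v^i(D)$ (i.e. $a<b$ and $v^i(D)(a)=v^i(D)(b)$ imply $\sigma_i(a)<\sigma_i(b)$), such that $v^i(C)=\sigma_{i-1}\circ v^i(D)\circ\sigma_i^{-1}$ for all $i$.
   Context: Write $\langle\ell\rangle=\{1<\dots<\ell\}$. A simple $k$-string diagram $D$ consists of natural numbers $\ell_0(D)=1,\ell_1(D),\dots,\ell_k(D)$ and arbitrary functions $v^i(D)\colon\langle\ell_i(D)\rangle\to\langle\ell_{i-1}(D)\rangle$; a globular $k$-pasting diagram is the same data with all $v^i$ order preserving. For a simple $k$-string diagram $D$ define orders $\overline{D}_i$ on the sets $\langle\ell_i(D)\rangle$ inductively: $\overline{D}_1=\langle\ell_1\rangle$ with its usual order, and $\overline{D}_{i+1}$ is the unique total order making $v^{i+1}\times\mathrm{id}\colon\overline{D}_{i+1}\to\overline{D}_i\times\langle\ell_{i+1}\rangle$ order preserving, the target carrying the lexicographic order ($(a,b)\le(a',b')$ iff $a<a'$, or $a=a'$ and $b\le b'$). Then all $v^i$ are order preserving for the orders $\overline{D}_i$, and $\pi(D)$ is the unique globular $k$-pasting diagram isomorphic to $(\overline{D}_k\to\cdots\to\overline{D}_1\to\langle1\rangle)$ via levelwise order-preserving bijections commuting with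 the maps. *)

From mathcomp Require Import all_boot.
Set Implicit Arguments. Unset Strict Implicit. Unset Printing Implicit Defensive.

(* Encoding: the set <l> = {1<...<l} is represented by {0,...,l-1} (nat),
   with the same (usual) order.  A k-string diagram is a record with
   ell i = l_i and v i : level i -> level (i-1) (meaningful only for
   1 <= i <= k and arguments a < ell i). *)
Record sdiag := SDiag { ell : nat -> nat ; v : nat -> nat -> nat }.

Definition is_sdiag (k : nat) (D : sdiag) : Prop :=
  ell D 0 = 1 /\
  forall i, 1 <= i <= k -> forall a, a < ell D i -> v D i a < ell D i.-1.

Definition is_globular (k : nat) (D : sdiag) : Prop :=
  is_sdiag k D /\
  forall i, 1 <= i <= k -> forall a b, a <= b < ell D i -> v D i a <= v D i b.

Definition diag_eq (k : nat) (C D : sdiag) : Prop :=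
  (forall i, i <= k -> ell C i = ell D i) /\
  (forall i, 1 <= i <= k -> forall a, a < ell C i -> v C i a = v D i a).

(* The strict order of \overline{D}_i: \overline{D}_0 = <1> (trivial), and
   \overline{D}_{i+1} is pulled back along v^{i+1} x id from the lexicographic
   order on \overline{D}_i x <l_{i+1}>.  For i+1 = 1 this gives the usual order
   on <l_1>, since v^1 is constant. *)
Fixpoint dlt (D : sdiag) (i : nat) : nat -> nat -> bool :=
  match i with
  | 0 => fun _ _ => false
  | j.+1 => fun a b =>
      dlt D j (v D j.+1 a) (v D j.+1 b) || ((v D j.+1 a == v D j.+1 b) && (a < b))
  end.

Definition drank (D : sdiag) (i a : nat) : nat :=
  count (fun b => dlt D i b a) (iota 0 (ell D i)).

Definition dunrank (D : sdiag) (i r : nat) : nat :=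
  nth 0 [seq a <- iota 0 (ell D i) | drank D i a == r] 0.

(* pi(D): transport of (\overline{D}_k -> ... -> \overline{D}_1 -> <1>) to the
   standard orders via the order-preserving bijections drank D i. *)
Definition piD (D : sdiag) : sdiag :=
  SDiag (ell D) (fun i r => drank D i.-1 (v D i (dunrank D i r))).

From mathcomp Require Import all_boot.
Set Implicit Arguments. Unset Strict Implicit. Unset Printing Implicit Defensive.

(* The rank [drank D i] is an order isomorphism from the level-[i] order of
   [D] onto the usual order of [<l_i>], so [pi(C) = pi(D)] says exactly that
   the bijections [drank C i^-1 \o drank D i] conjugate [v^i(D)] into [v^i(C)].
   They are order preserving on fibres, because on a fibre of [v^i] both
   level orders restrict to the usual order.  Conversely, permutations
   [sigma_i] as in the statement are, by induction on [i], order isomorphisms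
   between the level orders of [D] and [C]; hence they preserve ranks, i.e.
   they are these same bijections. *)

Lemma perm_map_iota (f : nat -> nat) n :
  (forall a, a < n -> f a < n) -> {in [pred a | a < n] &, injective f} ->
  perm_eq [seq f a | a <- iota 0 n] (iota 0 n).
Proof.
move=> f_lt f_inj.
have f_uniq : uniq [seq f a | a <- iota 0 n].
  rewrite map_inj_in_uniq ?iota_uniq // => a b.
  by rewrite !mem_iota => ha hb; apply: f_inj.
have f_sub : {subset [seq f a | a <- iota 0 n] <= iota 0 n}.
  by move=> x /mapP [a]; rewrite !mem_iota /= => ha ->; apply: f_lt.
have [_ f_size] := uniq_min_size f_uniq f_sub (eq_leq (esym (size_map _ _))).
exact: uniq_perm f_uniq (iota_uniq 0 n) f_size.
Qed.

Section Rank.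

Variables (lt : rel nat) (n : nat).

Definition rank a := count (fun b => lt b a) (iota 0 n).

Definition unrank r := nth 0 [seq a <- iota 0 n | rank a == r] 0.

Hypothesis lt_irr : irreflexive lt.

Lemma rank_lt_count (q : pred nat) a :
  a < n -> q a -> subpred (fun b => lt b a) q -> rank a < count q (iota 0 n).
Proof.
move=> ha qa lt_q; rewrite /rank -addn1.
have := count_predUI (fun b => lt b a) (pred1 a) (iota 0 n).
rewrite (@eq_count _ (predI _ _) pred0); last first.
  by move=> b /=; case: eqP => [->|]; rewrite ?lt_irr ?andbF.
rewrite count_pred0 addn0 (count_uniq_mem _ (iota_uniq 0 n)) mem_iota add0n ha.
move=> <-; apply: sub_count => b /=.
by case/orP => [/lt_q //|/eqP ->].
Qed.

Lemma rank_ltn a : a < n -> rank a < n.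
Proof.
by move=> ha; rewrite -[n in _ < n](size_iota 0) -count_predT rank_lt_count.
Qed.

Hypothesis lt_trans : transitive lt.

Lemma rank_mono a b : a < n -> lt a b -> rank a < rank b.
Proof. by move=> ha ab; apply: rank_lt_count => // c ca; apply: lt_trans ab. Qed.

Hypothesis lt_total :
  forall a b, a < n -> b < n -> a != b -> lt a b || lt b a.

Lemma lt_rank a b : a < n -> b < n -> (rank a < rank b) = lt a b.
Proof.
move=> ha hb; apply/idP/idP => [rab|]; last exact: rank_mono.
have [eab|/(lt_total ha hb)/orP[//|ba]] := eqVneq a b.
  by rewrite eab ltnn in rab.
by have := rank_mono hb ba; rewrite ltnNge ltnW.
Qed.

Lemma rank_inj : {in [pred a | a < n] &, injective rank}.
Proof.
move=> a b ha hb eab; apply: contraTeq isT => /(lt_total ha hb)/orP[] lab.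
  by rewrite -(lt_rank ha hb) eab ltnn in lab.
by rewrite -(lt_rank hb ha) eab ltnn in lab.
Qed.

Lemma unrank_spec r : r < n -> unrank r < n /\ rank (unrank r) = r.
Proof.
move=> hr; have := perm_mem (perm_map_iota rank_ltn rank_inj) r.
rewrite mem_iota hr => /mapP [a]; rewrite mem_iota /= => ha ear.
set s := [seq a <- iota 0 n | rank a == r].
have size_s : 0 < size s.
  by rewrite size_filter -has_count; apply/hasP; exists a; rewrite ?mem_iota ?ear.
have := mem_nth 0 size_s; rewrite mem_filter mem_iota /= => /andP [/eqP ? ?].
by rewrite /unrank -/s.
Qed.

Lemma unrank_ltn r : r < n -> unrank r < n.
Proof. by case/unrank_spec. Qed.

Lemma unrankK r : r < n -> rank (unrank r) = r.
Proof. by case/unrank_spec. Qed.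

Lemma rankK a : a < n -> unrank (rank a) = a.
Proof.
move=> ha; have [hu hr] := unrank_spec (rank_ltn ha).
exact: rank_inj hu ha hr.
Qed.

End Rank.

Lemma rank_transport (lt lt' : rel nat) n (f : nat -> nat) :
  (forall a, a < n -> f a < n) -> {in [pred a | a < n] &, injective f} ->
  (forall a b, a < n -> b < n -> lt' (f a) (f b) = lt a b) ->
  forall a, a < n -> rank lt' n (f a) = rank lt n a.
Proof.
move=> f_lt f_inj f_iso a ha; rewrite /rank.
have /permP <- := perm_map_iota f_lt f_inj; rewrite count_map.
by apply: eq_in_count => b; rewrite mem_iota /= => hb; apply: f_iso.
Qed.

Lemma dlt_irr (D : sdiag) i : irreflexive (dlt D i).
Proof. by elim: i => [|i IH] a //=; rewrite IH eqxx ltnn. Qed.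

Lemma dlt_trans (D : sdiag) i : transitive (dlt D i).
Proof.
elim: i => [|i IH] b a c //=.
case/orP=> [ab|/andP [/eqP eab ab]] /orP [bc|/andP [/eqP ebc bc]].
- by rewrite (IH _ _ _ ab bc).
- by rewrite -ebc ab.
- by rewrite eab bc.
- by rewrite eab ebc eqxx (ltn_trans ab bc) orbT.
Qed.

Lemma dlt_total k (D : sdiag) : is_sdiag k D -> forall i, i <= k ->
  forall a b, a < ell D i -> b < ell D i -> a != b -> dlt D i a b || dlt D i b a.
Proof.
move=> [ell0 v_lt]; elim=> [|i IH] hi a b ha hb nab /=.
  by move: ha hb nab; rewrite ell0; case: a; case: b.
have [eab|neab] := eqVneq (v D i.+1 a) (v D i.+1 b).
  by rewrite eab dlt_irr /= -neq_ltn.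
rewrite !andFb !orbF.
apply: IH => //; first exact: ltnW.
all: by apply: v_lt; rewrite ?hi.
Qed.

Lemma dlt_fibre (D : sdiag) i a b :
  v D i.+1 a = v D i.+1 b -> dlt D i.+1 a b = (a < b).
Proof. by move=> /= ->; rewrite dlt_irr eqxx. Qed.

Lemma drank0 (D : sdiag) a : drank D 0 a = 0.
Proof. exact: count_pred0. Qed.

Section DiagramRank.

Variables (k : nat) (D : sdiag) (i : nat).
Hypotheses (HD : is_sdiag k D) (hi : i <= k).

Lemma drank_ltn a : a < ell D i -> drank D i a < ell D i.
Proof. exact: rank_ltn (@dlt_irr D i) a. Qed.

Lemma lt_drank a b : a < ell D i -> b < ell D i ->
  (drank D i a < drank D i b) = dlt D i a b.
Proof. exact: (lt_rank (@dlt_irr D i) (@dlt_trans D i) (dlt_total HD hi)). Qed.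

Lemma drank_inj : {in [pred a | a < ell D i] &, injective (drank D i)}.
Proof. exact: (rank_inj (@dlt_irr D i) (@dlt_trans D i) (dlt_total HD hi)). Qed.

Lemma dunrank_ltn r : r < ell D i -> dunrank D i r < ell D i.
Proof. exact: (unrank_ltn (@dlt_irr D i) (@dlt_trans D i) (dlt_total HD hi)). Qed.

Lemma dunrankK r : r < ell D i -> drank D i (dunrank D i r) = r.
Proof. exact: (unrankK (@dlt_irr D i) (@dlt_trans D i) (dlt_total HD hi)). Qed.

Lemma drankK a : a < ell D i -> dunrank D i (drank D i a) = a.
Proof. exact: (rankK (@dlt_irr D i) (@dlt_trans D i) (dlt_total HD hi)). Qed.

End DiagramRank.

Definition rank_preserving (C D : sdiag) i (f : nat -> nat) : Prop :=
  forall a, a < ell D i -> f a < ell C i /\ drank C i (f a) = drank D i a.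

Definition drank_transfer (C D : sdiag) i a := dunrank C i (drank D i a).

Definition fibre_mono_conj k (C D : sdiag) (sigma : nat -> nat -> nat) :=
  forall i, 0 < i <= k ->
    (forall a, a < ell D i -> sigma i a < ell D i) /\
    {in [pred a | a < ell D i] &, injective (sigma i)} /\
    (forall a b, a < b < ell D i -> v D i a = v D i b -> sigma i a < sigma i b) /\
    (forall a, a < ell D i -> v C i (sigma i a) = sigma i.-1 (v D i a)).

Section RankPreserving.

Variables (k : nat) (C D : sdiag).
Hypotheses (HC : is_sdiag k C) (HD : is_sdiag k D).
Hypothesis ellCD : forall i, i <= k -> ell C i = ell D i.

Lemma rank_preserving_inj i f : i <= k -> rank_preserving C D i f ->
  {in [pred a | a < ell D i] &, injective f}.
Proof.
move=> hi f_rk a b ha hb fab; apply: (drank_inj HD hi ha hb).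
by rewrite -(f_rk a ha).2 -(f_rk b hb).2 fab.
Qed.

Lemma rank_preserving_dlt i f a b : i <= k -> rank_preserving C D i f ->
  a < ell D i -> b < ell D i -> dlt C i (f a) (f b) = dlt D i a b.
Proof.
move=> hi f_rk ha hb; have [fa ra] := f_rk a ha; have [fb rb] := f_rk b hb.
by rewrite -(lt_drank HC hi fa fb) ra rb (lt_drank HD hi ha hb).
Qed.

Lemma rank_preserving_dunrank i f r : i <= k -> rank_preserving C D i f ->
  r < ell D i -> f (dunrank D i r) = dunrank C i r.
Proof.
move=> hi f_rk hr; have [fa ra] := f_rk _ (dunrank_ltn HD hi hr).
by rewrite -(drankK HC hi fa) ra (dunrankK HD hi hr).
Qed.

Lemma rank_preserving_transfer i : i <= k ->
  rank_preserving C D i (drank_transfer C D i).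
Proof.
move=> hi a ha; have hr : drank D i a < ell C i by rewrite ellCD ?drank_ltn.
by split; [apply: (dunrank_ltn HC hi) | apply: (dunrankK HC hi)].
Qed.

Lemma rank_preserving_of_dlt i f : i <= k ->
  (forall a, a < ell D i -> f a < ell D i) ->
  {in [pred a | a < ell D i] &, injective f} ->
  (forall a b, a < ell D i -> b < ell D i -> dlt C i (f a) (f b) = dlt D i a b) ->
  rank_preserving C D i f.
Proof.
move=> hi f_lt f_inj f_dlt a ha; rewrite ellCD // f_lt //; split=> //.
by rewrite /drank ellCD //; apply: (rank_transport f_lt f_inj f_dlt).
Qed.

Lemma eq_piD_levelP i f g : 0 < i <= k ->
  rank_preserving C D i f -> rank_preserving C D i.-1 g ->
  (forall r, r < ell C i -> v (piD C) i r = v (piD D) i r) <->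
  (forall a, a < ell D i -> v C i (f a) = g (v D i a)).
Proof.
move=> hi f_rk g_rk; have hik : i <= k by case/andP: hi.
have hik1 : i.-1 <= k by apply: leq_trans (leq_pred i) hik.
have vD_lt a : a < ell D i -> v D i a < ell D i.-1 by apply: HD.2.
split=> [v_eq a ha | v_comm r hr] /=.
- have [fa ra] := f_rk a ha; have [ga ra1] := g_rk _ (vD_lt a ha).
  apply: (drank_inj HC hik1) => //; first exact: HC.2.
  have hr : drank D i a < ell C i by rewrite ellCD ?drank_ltn.
  have := v_eq _ hr.
  by rewrite /= -{1}ra (drankK HC hik fa) (drankK HD hik ha) ra1.
- rewrite ellCD // in hr; have ha := dunrank_ltn HD hik hr.
  rewrite -(rank_preserving_dunrank hik f_rk hr) v_comm //.
  exact: (g_rk _ (vD_lt _ ha)).2.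
Qed.

Lemma commuting_fibre_mono i f g : 0 < i <= k -> rank_preserving C D i f ->
  (forall a, a < ell D i -> v C i (f a) = g (v D i a)) ->
  forall a b, a < b < ell D i -> v D i a = v D i b -> f a < f b.
Proof.
case: i => [//|j] hj f_rk f_comm a b /andP [ab hb] vab.
have ha : a < ell D j.+1 := ltn_trans ab hb.
rewrite -(@dlt_fibre C j) ?f_comm ?vab // (rank_preserving_dlt _ f_rk) //.
by rewrite dlt_fibre.
Qed.

Lemma fibre_mono_conj_rank_preserving sigma :
  sigma 0 0 = 0 -> fibre_mono_conj k C D sigma ->
  forall i, i <= k -> rank_preserving C D i (sigma i).
Proof.
move=> s0 s_hyp; elim=> [_ a | i IH hi].
  by rewrite HD.1 ltnS leqn0 => /eqP ->; rewrite s0 HC.1 !drank0.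
have [s_lt [s_inj [s_fib s_comm]]] := s_hyp i.+1 hi.
have s_rk := IH (ltnW hi); have vD_lt a : a < ell D i.+1 -> v D i.+1 a < ell D i.
  by apply: HD.2.
apply: rank_preserving_of_dlt => // a b ha hb /=.
rewrite !s_comm // (rank_preserving_dlt (ltnW hi) s_rk) ?vD_lt //.
rewrite (inj_in_eq (rank_preserving_inj (ltnW hi) s_rk)) ?inE ?vD_lt //.
case: eqP => //= vab; congr (_ || _).
case: (ltngtP a b) => [ab|ba|->]; last exact: ltnn.
- by apply: s_fib; rewrite ?ab.
- by apply/negbTE; rewrite -leqNgt ltnW // s_fib ?ba.
Qed.

End RankPreserving.

Theorem mainTheorem5 (k : nat) (C D : sdiag) :
  is_sdiag k C -> is_sdiag k D ->
  (diag_eq k (piD C) (piD D) <->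
   ((forall i, i <= k -> ell C i = ell D i) /\
    exists sigma : nat -> nat -> nat,
      sigma 0 0 = 0 /\
      (forall i, 1 <= i <= k ->
         (forall a, a < ell D i -> sigma i a < ell D i) /\
         {in [pred a | a < ell D i] &, injective (sigma i)} /\
         (forall a b, a < b < ell D i -> v D i a = v D i b ->
            sigma i a < sigma i b) /\
         (forall a, a < ell D i -> v C i (sigma i a) = sigma i.-1 (v D i a))))).
Proof.
move=> HC HD; split=> [[ellCD v_eq] | [ellCD [sigma [s0 s_hyp]]]].
- have tau_rk := @rank_preserving_transfer k C D HC ellCD.
  have tau_comm i : 0 < i <= k -> forall a, a < ell D i ->
      v C i (drank_transfer C D i a) = drank_transfer C D i.-1 (v D i a).
    move=> hi; have hik : i <= k by case/andP: hi.
    have hik1 : i.-1 <= k := leq_trans (leq_pred i) hik.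
    have := eq_piD_levelP HC HD ellCD hi (tau_rk i hik) (tau_rk i.-1 hik1).
    by case=> + _; apply; apply: v_eq.
  split=> //; exists (drank_transfer C D); split.
    have lt0 : 0 < ell D 0 by rewrite HD.1.
    have [+ _] := tau_rk 0 (leq0n k) 0 lt0.
    by rewrite HC.1 ltnS leqn0 => /eqP.
  move=> i hi; have hik : i <= k by case/andP: hi.
  split; first by move=> a ha; rewrite -ellCD //; apply: (tau_rk i hik a ha).1.
  split; first exact: (rank_preserving_inj HD hik (tau_rk i hik)).
  split; last exact: tau_comm.
  exact: (commuting_fibre_mono HC HD hi (tau_rk i hik) (tau_comm i hi)).
- have s_rk := fibre_mono_conj_rank_preserving HC HD ellCD s0 s_hyp.
  split=> // i hi; have hik : i <= k by case/andP: hi.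
  have hik1 : i.-1 <= k := leq_trans (leq_pred i) hik.
  apply: (eq_piD_levelP HC HD ellCD hi (s_rk i hik) (s_rk i.-1 hik1)).2.
  by case: (s_hyp i hi) => _ [_ []].
Qed.
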